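(* Let $n\ge 1$ and let $x:\mathbb{N}\to\mathbb{R}$ satisfy $x(t+n)=a_1x(t+n-1)+\dots+a_nx(t)$ for all $t\in\mathbb{N}$, with $a_1,\dots,a_n\in\mathbb{R}$, and assume $x$ satisfies no linear difference equation $x(t+m)=c_1x(t+m-1)+\dots+c_mx(t)$ ($\forall t$) of order $m<n$. Let $X\in\mathbb{R}(z)$ be the rational function whose expansion at infinity is $\sum_{t\ge0}x(t)z^{-(t+1)}$. Then $a_1,\dots,a_n$ are linearly identifiable without determining the initial conditions: the $(n+1)\times(n+1)$ matrix $\mathcal{N}$ whose $\mu$-th row ($0\le\mu\le n$) is $$\Big(\tfrac{d^{n+\mu}}{dz^{n+\mu}}(z^nX),\ \tfrac{d^{n+\mu}}{dz^{n+\mu}}(z^{n-1}X),\ \dots,\ \tfrac{d^{n+\mu}}{dz^{n+\mu}}X\Big)$$ has rank $n$, and $(\alpha_1,\dots,\alpha_n)=(a_1,\dots,a_n)$ is the unique solution in $\mathbb{R}(z)^n$ of the linear system $$\frac{d^{n+\mu}}{dz^{n+\mu}}(z^nX)=\sum_{i=1}^n\alpha_i\,\frac{d^{n+\mu}}{dz^{n+\mu}}(z^{n-i}X),\qquad \mu=0,1,\dots,n.$$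
   Context: $\mathbb{R}(z)$ is the field of real rational functions with derivation $d/dz$. Here $Q(z)X(z)$, with $Q(z)=z^n-a_1z^{n-1}-\dots-a_n$, is a polynomial of degree at most $n-1$ encoding the initial conditions; derivatives of order $\ge n$ eliminate it. *)

From HB Require Import structures.
From mathcomp Require Import all_boot all_order all_algebra.
Set Implicit Arguments. Unset Strict Implicit. Unset Printing Implicit Defensive.
Import Order.TTheory GRing.Theory Num.Theory.
Local Open Scope ring_scope.

Notation ratfun R := {fraction {poly R}}.
Notation "x %:F" := (@FracField.tofrac _ x) : ring_scope.

Section RatFun.
Variable R : realFieldType.

Definition zF : ratfun R := ('X)%:F.

(* The derivation d/dz on R(z): computed on any representative p/q as
   (p' q - p q') / q^2 (independent of the representative). *)
Definition fderiv (f : ratfun R) : ratfun R :=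
  let r := repr f in
  ((\n_r)^`() * \d_r - \n_r * (\d_r)^`())%:F / ((\d_r) ^+ 2)%:F.

Definition fderivn (k : nat) (f : ratfun R) : ratfun R := iter k fderiv f.

Definition strictly_proper (f : ratfun R) : Prop :=
  exists p q : {poly R}, [/\ q != 0, (size p < size q)%N & f = p%:F / q%:F].

(* X has expansion at infinity sum_{t>=0} x(t) z^{-(t+1)}:
   for every N, z^N X - sum_{t<N} x(t) z^{N-1-t} = O(1/z). *)
Definition expansion_at_infinity (x : nat -> R) (X : ratfun R) : Prop :=
  forall N : nat,
    strictly_proper (zF ^+ N * X - \sum_(t < N) (x t)%:P%:F * zF ^+ (N - 1 - t)).

(* x satisfies x(t+m) = c_1 x(t+m-1) + ... + c_m x(t), with c_(i+1) = c i. *)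
Definition satisfies_lde (m : nat) (c : 'I_m -> R) (x : nat -> R) : Prop :=
  forall t : nat, x (t + m)%N = \sum_(i < m) c i * x (t + m - 1 - i)%N.

End RatFun.

From HB Require Import structures.
From mathcomp Require Import all_boot all_order all_algebra.
From mathcomp Require Import generic_quotient ring zify.
Import Order.TTheory GRing.Theory Num.Theory.
Local Open Scope ring_scope.

(* Write W_i for the n-th derivative of z^(n-1-i) X.  The recurrence gives
   z^n X = T0 + sum_i a_i z^(n-1-i) X with T0 a polynomial of degree < n,
   which n-fold differentiation kills: the first column of the matrix is
   sum_i a_i times the others.  Minimality makes the W_i linearly independent
   over the constants R: a relation sum_i c_i W_i = 0 integrates to C X = P
   with C = sum_i c_i z^(n-1-i) and P polynomial, and comparing coefficients
   of the expansion at infinity turns C X = P into a recurrence of order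
   < n.  A Wronskian argument upgrades independence over R to independence
   over R(z) of the last n columns, which gives both the rank and the
   uniqueness of the solution. *)

(* Proved over an abstract field: [field] directly on [{fraction {poly R}}]
   is prohibitively slow. *)
Section QuotientRule.
Variable F : fieldType.

Lemma quotient_rule_reparam (P Q D P' Q' D' : F) : Q != 0 -> D != 0 ->
  ((P' * D + P * D' - P * D / Q * Q') / Q * D - P * D / Q * D') / D ^+ 2
  = (P' * Q - P * Q') / Q ^+ 2.
Proof. by move=> hQ hD; field; rewrite hQ hD. Qed.

Lemma quotient_rule_add (A B C E A' B' C' E' : F) : B != 0 -> E != 0 ->
  ((A' * E + A * E' + (C' * B + C * B')) * (B * E)
     - (A * E + C * B) * (B' * E + B * E')) / (B * E) ^+ 2
  = (A' * B - A * B') / B ^+ 2 + (C' * E - C * E') / E ^+ 2.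
Proof. by move=> hB hE; field; rewrite hB hE. Qed.

Lemma quotient_rule_mul (A B C E A' B' C' E' : F) : B != 0 -> E != 0 ->
  ((A' * C + A * C') * (B * E) - A * C * (B' * E + B * E')) / (B * E) ^+ 2
  = (A' * B - A * B') / B ^+ 2 * (C / E) + A / B * ((C' * E - C * E') / E ^+ 2).
Proof. by move=> hB hE; field; rewrite hB hE. Qed.

End QuotientRule.

Lemma ltn_size_mulr (D : idomainType) (p q r : {poly D}) :
  (size p < size q)%N -> r != 0 -> (size (p * r)%R < size (q * r)%R)%N.
Proof.
move=> hpq hr; have [->|hp] := eqVneq p 0.
  rewrite mul0r size_poly0 size_poly_gt0 mulf_neq0 //.
  by rewrite -size_poly_gt0 (leq_ltn_trans _ hpq).
have hq : q != 0 by rewrite -size_poly_gt0 (leq_ltn_trans _ hpq).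
rewrite !size_mul //; move: hr; rewrite -size_poly_gt0.
by case: (size r) => // k _; rewrite !addnS /= ltn_add2r.
Qed.

Section DependentFirstColumn.
Context {F : fieldType} {k n : nat} {A : 'M[F]_(k, n.+1)} {c : 'I_n -> F}.
Hypothesis col0_dep : forall r, A r ord0 = \sum_(i < n) c i * A r (lift ord0 i).
Hypothesis cols_free : forall v : 'I_n -> F,
  (forall r, \sum_(i < n) v i * A r (lift ord0 i) = 0) -> forall i, v i = 0.

Lemma rank_dep_first_col : \rank A = n.
Proof.
set B : 'M_(k, n) := \matrix_(r, i) A r (lift ord0 i).
have AB : A = B *m \matrix_(i, j) oapp (fun i' => (i == i')%:R) (c i) (unlift ord0 j).
  apply/matrixP => r j; rewrite !mxE; case: (unliftP ord0 j) => [j' ->|->].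
    rewrite (bigD1 j') //= !mxE liftK /= eqxx mulr1 big1 ?addr0 // => i ij'.
    by rewrite !mxE liftK /= (negbTE ij') mulr0.
  by rewrite col0_dep; apply: eq_bigr => i _; rewrite !mxE unlift_none /= mulrC.
have BA : B = A *m \matrix_(j, i) (j == lift ord0 i)%:R.
  apply/matrixP => r i; rewrite !mxE (bigD1 (lift ord0 i)) //= !mxE eqxx mulr1.
  by rewrite big1 ?addr0 // => j ji; rewrite !mxE (negbTE ji) mulr0.
have rankB : \rank B = n.
  rewrite -mxrank_tr; apply/eqP/inj_row_free => v vB0; apply/rowP => i.
  rewrite mxE; apply: (cols_free (fun i => v 0 i)) => r.
  have /rowP/(_ r) := vB0; rewrite !mxE => vB0r.
  by rewrite -[RHS]vB0r; apply: eq_bigr => j _; rewrite !mxE.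
apply/eqP; rewrite eqn_leq; apply/andP; split.
  by rewrite [X in \rank X]AB (leq_trans (mxrankM_maxl _ _)) ?rankB.
by rewrite -[X in (X <= _)%N]rankB [X in \rank X]BA mxrankM_maxl.
Qed.

Lemma dep_first_col_coefP (alpha : 'I_n -> F) :
  (forall r, A r ord0 = \sum_(i < n) alpha i * A r (lift ord0 i))
  <-> (forall i, alpha i = c i).
Proof.
split=> [alpha_dep i|alpha_c r]; last by under eq_bigr do rewrite alpha_c.
apply/eqP; rewrite -subr_eq0; apply/eqP; move: i; apply: cols_free => r.
under eq_bigr do rewrite mulrBl.
by rewrite sumrB -alpha_dep -col0_dep subrr.
Qed.

End DependentFirstColumn.

Section RationalFunctions.
Context {R : realFieldType}.
Local Notation K := (ratfun R).

Lemma tofrac_neq0 {q : {poly R}} : q != 0 -> q%:F != 0 :> K.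
Proof. by rewrite tofrac_eq0. Qed.

Lemma repr_fracE (f : K) : f = (\n_(repr f))%:F / (\d_(repr f))%:F.
Proof.
set r := repr f; have hd := tofrac_neq0 (denom_ratioP r).
rewrite -[f in LHS]reprK -/r; apply: (mulIf hd); rewrite divfK //.
unlock FracField.tofrac.
rewrite -[_ * _]/(FracField.mul _ _) -FracField.pi_mul.
apply/eqmodP; rewrite /= FracField.equivfE /FracField.mulf.
rewrite !numden_Ratio ?mulr1 ?mul1r ?oner_neq0 ?denom_ratioP ?mulf_neq0 //.
by rewrite mulrC.
Qed.

Lemma ratfun_frac (f : K) : exists p q : {poly R}, q != 0 /\ f = p%:F / q%:F.
Proof. by exists (\n_(repr f)), (\d_(repr f)); rewrite -repr_fracE denom_ratioP. Qed.

Lemma eq_tofrac_div {p q p' q' : {poly R}} : q != 0 -> q' != 0 ->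
  p%:F / q%:F = p'%:F / q'%:F :> K -> p * q' = p' * q.
Proof.
move=> hq hq' /eqP; rewrite eqr_div ?tofrac_neq0 // -!rmorphM /= tofrac_eq.
by move/eqP.
Qed.

Lemma fderiv_frac (p q : {poly R}) : q != 0 ->
  fderiv (p%:F / q%:F) = (p^`() * q - p * q^`())%:F / (q ^+ 2)%:F.
Proof.
move=> hq; rewrite /fderiv; set f := p%:F / q%:F.
have := repr_fracE f; set n := \n_(repr f); set d := \d_(repr f) => hf.
have hd : d != 0 := denom_ratioP _.
clearbody n d.
have e : p * d = n * q by apply: eq_tofrac_div hf.
have e' : p^`() * d + p * d^`() = n^`() * q + n * q^`() by rewrite -!derivM e.
have hQ := tofrac_neq0 hq; have hD := tofrac_neq0 hd.
have En : n%:F = p%:F * d%:F / q%:F :> K by rewrite -tofracM e tofracM (mulfK hQ).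
have En' : (n^`())%:F = ((p^`())%:F * d%:F + p%:F * (d^`())%:F
                         - n%:F * (q^`())%:F) / q%:F :> K.
  by rewrite -!tofracM -tofracD -tofracB e' addrK tofracM (mulfK hQ).
rewrite !tofracB !tofracXn !tofracM En' En.
exact: (@quotient_rule_reparam K p%:F q%:F d%:F (p^`())%:F (q^`())%:F (d^`())%:F hQ hD).
Qed.

Lemma fderiv_tofrac (p : {poly R}) : fderiv p%:F = (p^`())%:F.
Proof.
have := @fderiv_frac p 1 (oner_neq0 _).
by rewrite tofrac1 !divr1 derivC mulr0 subr0 mulr1 expr1n tofrac1 divr1.
Qed.

Lemma fderivD (f g : K) : fderiv (f + g) = fderiv f + fderiv g.
Proof.
have [a [b [hb ->]]] := ratfun_frac f; have [c [e [he ->]]] := ratfun_frac g.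
have hB := tofrac_neq0 hb; have hE := tofrac_neq0 he.
have -> : a%:F / b%:F + c%:F / e%:F = (a * e + c * b)%:F / (b * e)%:F :> K.
  by rewrite (addf_div _ _ hB hE) tofracD !tofracM.
rewrite (fderiv_frac _ _ (mulf_neq0 hb he)) (fderiv_frac _ _ hb) (fderiv_frac _ _ he).
rewrite !derivD !derivM.
rewrite !tofracB !tofracXn ?tofracD !tofracM ?tofracD ?tofracM.
exact: (@quotient_rule_add K a%:F b%:F c%:F e%:F _ _ _ _ hB hE).
Qed.

Lemma fderivM (f g : K) : fderiv (f * g) = fderiv f * g + f * fderiv g.
Proof.
have [a [b [hb ->]]] := ratfun_frac f; have [c [e [he ->]]] := ratfun_frac g.
have hB := tofrac_neq0 hb; have hE := tofrac_neq0 he.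
have -> : a%:F / b%:F * (c%:F / e%:F) = (a * c)%:F / (b * e)%:F :> K.
  by rewrite mulf_div !tofracM.
rewrite (fderiv_frac _ _ (mulf_neq0 hb he)) (fderiv_frac _ _ hb) (fderiv_frac _ _ he).
rewrite !derivM.
rewrite !tofracB !tofracXn ?tofracD !tofracM ?tofracD ?tofracM.
exact: (@quotient_rule_mul K a%:F b%:F c%:F e%:F _ _ _ _ hB hE).
Qed.

Lemma fderiv0 : fderiv (0 : K) = 0.
Proof. by rewrite -tofrac0 fderiv_tofrac deriv0 tofrac0. Qed.

Lemma fderivC (c : R) : fderiv c%:P%:F = 0.
Proof. by rewrite fderiv_tofrac derivC tofrac0. Qed.

Lemma fderiv1 : fderiv (1 : K) = 0.
Proof. by rewrite -tofrac1 -polyC1 fderivC. Qed.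

Lemma fderivN (f : K) : fderiv (- f) = - fderiv f.
Proof. by apply/eqP; rewrite -subr_eq0 opprK -fderivD addNr fderiv0. Qed.

Lemma fderivB (f g : K) : fderiv (f - g) = fderiv f - fderiv g.
Proof. by rewrite fderivD fderivN. Qed.

Lemma fderiv_sum I (r : seq I) (P : pred I) (F : I -> K) :
  fderiv (\sum_(i <- r | P i) F i) = \sum_(i <- r | P i) fderiv (F i).
Proof. exact: (big_morph _ fderivD fderiv0). Qed.

Lemma fderivCM (c : R) (f : K) : fderiv (c%:P%:F * f) = c%:P%:F * fderiv f.
Proof. by rewrite fderivM fderivC mul0r add0r. Qed.

Lemma fderivn_addn m k (f : K) : fderivn (m + k) f = fderivn m (fderivn k f).
Proof. exact: iterD. Qed.

Lemma fderivnD k (f g : K) : fderivn k (f + g) = fderivn k f + fderivn k g.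
Proof. by elim: k => [//|k IH]; rewrite /= IH fderivD. Qed.

Lemma fderivn0 k : fderivn k (0 : K) = 0.
Proof. by elim: k => [//|k IH]; rewrite /= IH fderiv0. Qed.

Lemma fderivn_sum k I (r : seq I) (P : pred I) (F : I -> K) :
  fderivn k (\sum_(i <- r | P i) F i) = \sum_(i <- r | P i) fderivn k (F i).
Proof. exact: (big_morph _ (fderivnD k) (fderivn0 k)). Qed.

Lemma fderivnCM k (c : R) (f : K) : fderivn k (c%:P%:F * f) = c%:P%:F * fderivn k f.
Proof. by elim: k => [//|k IH]; rewrite /= IH fderivCM. Qed.

Lemma fderivn_tofrac k (p : {poly R}) : fderivn k p%:F = (p^`(k))%:F.
Proof. by elim: k => [|k IH]; rewrite ?derivn0 // derivnS -fderiv_tofrac -IH. Qed.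

Lemma deriv_eq0_polyC (p : {poly R}) : p^`() = 0 -> p = (p`_0)%:P.
Proof.
move=> h; apply/polyP => -[|j]; rewrite coefC //=.
by have /esym/eqP := coef_deriv p j; rewrite h coef0 mulrn_eq0 => /eqP.
Qed.

(* Write f = a/b in lowest terms; then a' b = a b', so b | b' forces b' = 0
   and hence a' = 0. *)
Lemma fderiv_eq0 {f : K} : fderiv f = 0 -> exists c : R, f = c%:P%:F.
Proof.
have [a [b [hb ->]]] := ratfun_frac f.
have [->|ha] := eqVneq a 0.
  by move=> _; exists 0; rewrite polyC0 tofrac0 mul0r.
set g := gcdp a b; have hg : g != 0 by rewrite gcdp_eq0 negb_and ha.
set a1 := a %/ g; set b1 := b %/ g.
have ea : a = a1 * g by rewrite divpK // dvdp_gcdl.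
have eb : b = b1 * g by rewrite divpK // dvdp_gcdr.
have cop : coprimep a1 b1 by apply: coprimep_div_gcd; rewrite ha.
have hb1 : b1 != 0 by apply: contraNneq hb => e; rewrite eb e mul0r.
have -> : a%:F / b%:F = a1%:F / b1%:F :> K.
  by rewrite ea eb !tofracM invfM mulrACA divff ?tofrac_neq0 ?mulr1.
clearbody a1 b1.
rewrite (fderiv_frac _ _ hb1) => /eqP.
rewrite mulf_eq0 invr_eq0 !tofrac_eq0 expf_eq0 (negbTE hb1) andbF orbF.
rewrite subr_eq0 => /eqP e.
have db1 : b1^`() = 0.
  apply/eqP; apply: contraT => hnz.
  have : b1 %| b1^`() by rewrite -(@Gauss_dvdpr _ _ a1) 1?coprimep_sym // -e dvdp_mull.
  by move/(dvdp_leq hnz); rewrite leqNgt lt_size_deriv.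
move: e; rewrite db1 mulr0 => /eqP; rewrite mulf_eq0 (negbTE hb1) orbF => /eqP da1.
rewrite (deriv_eq0_polyC _ da1) (deriv_eq0_polyC _ db1).
have hb0 : b1`_0 != 0.
  by apply: contraNneq hb1 => e0; rewrite (deriv_eq0_polyC _ db1) e0.
have hB0 : (b1`_0)%:P%:F != 0 :> K by rewrite tofrac_eq0 polyC_eq0.
exists (a1`_0 / b1`_0); apply: (mulIf hB0).
by rewrite (divfK hB0) -tofracM -polyCM (divfK hb0).
Qed.

Definition antideriv (p : {poly R}) : {poly R} :=
  \poly_(i < (size p).+1) (if i is j.+1 then p`_j / j.+1%:R else 0).

Lemma antiderivK (p : {poly R}) : (antideriv p)^`() = p.
Proof.
apply/polyP => i; rewrite coef_deriv coef_poly ltnS /=.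
case: ltnP => hi; last by rewrite mul0rn nth_default.
have hi1 : (i.+1%:R : R) != 0 by rewrite pnatr_eq0.
by rewrite -(mulr_natr (p`_i / i.+1%:R)) (divfK hi1).
Qed.

Lemma fderivn_eq0 k (f : K) :
  fderivn k f = 0 -> exists2 p : {poly R}, (size p <= k)%N & f = p%:F.
Proof.
elim: k f => [|k IH] f; first by move=> /= ->; exists 0; rewrite ?size_poly0 ?tofrac0.
rewrite -addn1 fderivn_addn => /IH [p hp hf].
have /fderiv_eq0 [c hc] : fderiv (f - (antideriv p)%:F) = 0.
  by rewrite fderivB -[fderiv f]/(fderivn 1 f) hf fderiv_tofrac antiderivK subrr.
exists (antideriv p + c%:P); last by rewrite tofracD -hc addrC subrK.
rewrite (leq_trans (size_polyD _ _)) // geq_max addn1.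
by rewrite (leq_trans (size_poly _ _)) ?ltnS // (leq_trans (size_polyC_leq1 c)).
Qed.

Lemma size_polyCM_leq (c : R) (p : {poly R}) : (size (c%:P * p)%R <= size p)%N.
Proof. by rewrite mul_polyC size_scale_leq. Qed.

Lemma strictly_proper0 : strictly_proper (0 : K).
Proof.
by exists 0, 1; rewrite oner_neq0 size_poly0 size_poly1 tofrac0 mul0r.
Qed.

Lemma strictly_properD (f g : K) :
  strictly_proper f -> strictly_proper g -> strictly_proper (f + g).
Proof.
move=> [a [b [hb hab ->]]] [c [e [he hce ->]]].
exists (a * e + c * b), (b * e); split; first by rewrite mulf_neq0.
  rewrite (leq_ltn_trans (size_polyD _ _)) // gtn_max.
  apply/andP; split; first exact: ltn_size_mulr.
  by rewrite [b * e]mulrC; apply: ltn_size_mulr.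
by rewrite tofracD !tofracM (addf_div _ _ (tofrac_neq0 hb) (tofrac_neq0 he)).
Qed.

Lemma strictly_properCM (c : R) (f : K) :
  strictly_proper f -> strictly_proper (c%:P%:F * f).
Proof.
move=> [a [b [hb hab ->]]]; exists (c%:P * a), b; split => //.
  exact: leq_ltn_trans (size_polyCM_leq _ _) _.
by rewrite tofracM mulrA.
Qed.

Lemma strictly_properN (f : K) : strictly_proper f -> strictly_proper (- f).
Proof.
by move/(strictly_properCM (-1)); rewrite polyCN tofracN polyC1 tofrac1 mulN1r.
Qed.

Lemma strictly_properB (f g : K) :
  strictly_proper f -> strictly_proper g -> strictly_proper (f - g).
Proof. by move=> hf /strictly_properN; apply: strictly_properD. Qed.

Lemma strictly_proper_sum I (r : seq I) (P : pred I) (F : I -> K) :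
  (forall i, P i -> strictly_proper (F i)) ->
  strictly_proper (\sum_(i <- r | P i) F i).
Proof.
move=> h; elim/big_rec: _ => [|i y Pi hy]; first exact: strictly_proper0.
by apply: strictly_properD => //; apply: h.
Qed.

Lemma strictly_proper_tofrac {p : {poly R}} : strictly_proper p%:F -> p = 0.
Proof.
move=> [a [b [hb hab]]]; rewrite -[p%:F]divr1 -tofrac1.
move/(eq_tofrac_div (oner_neq0 _) hb); rewrite mulr1 => hpb.
apply/eqP; apply: contraTT hab => hp.
rewrite -leqNgt -hpb size_mul //; rewrite -size_poly_gt0 in hp.
by case: (size p) hp => // k _; rewrite addSn leq_addl.
Qed.

Lemma zF_exp m : zF R ^+ m = ('X^m)%:F.
Proof. by rewrite /zF tofracXn. Qed.

(* For [E = p/q] take [m = size q]: then [deg (X^m p) >= deg q] unless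
   [p = 0]. *)
Lemma strictly_proper_zF_exp_eq0 (E : K) :
  (forall m, strictly_proper (zF R ^+ m * E)) -> E = 0.
Proof.
have [p [q [hq ->]]] := ratfun_frac E.
move=> /(_ (size q)); rewrite zF_exp mulrA -tofracM => -[a [b [hb hab e]]].
have hpb := eq_tofrac_div hq hb e.
have [->|hp] := eqVneq p 0; first by rewrite tofrac0 mul0r.
have hX : 'X^(size q) != 0 :> {poly R} by rewrite monic_neq0 ?monicXn.
have e1 : size ('X^(size q) * p * b)%R = (size q + size p + size b).-1.
  by rewrite size_mul ?mulf_neq0 // size_mul // size_polyXn addSn.
have e2 : (size (a * q)%R <= (size a + size q).-1)%N by exact: size_polyMleq.
have hp1 : (0 < size p)%N by rewrite size_poly_gt0.
have hb1 : (0 < size b)%N by rewrite size_poly_gt0.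
move: e1; rewrite hpb => e1; lia.
Qed.

Definition trunc_series (x : nat -> R) (m : nat) : {poly R} :=
  \sum_(t < m) (x t)%:P * 'X^(m - 1 - t).

Lemma tofrac_trunc_series (x : nat -> R) m :
  (trunc_series x m)%:F = \sum_(t < m) (x t)%:P%:F * zF R ^+ (m - 1 - t).
Proof. by rewrite rmorph_sum /=; apply: eq_bigr => t _; rewrite tofracM zF_exp. Qed.

Lemma trunc_seriesS (x : nat -> R) m :
  trunc_series x m.+1 = trunc_series x m * 'X + (x m)%:P.
Proof.
rewrite /trunc_series big_ord_recr /= subn1 subnn expr0 mulr1 mulr_suml.
congr (_ + _); apply: eq_bigr => t _; rewrite -mulrA -exprSr; congr (_ * 'X^_).
by have := ltn_ord t; lia.
Qed.

Lemma trunc_seriesD (x : nat -> R) m k :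
  trunc_series x (m + k)
  = trunc_series x m * 'X^k + trunc_series (fun s => x (m + s)%N) k.
Proof.
elim: k => [|k IH]; first by rewrite addn0 expr0 mulr1 /trunc_series big_ord0 addr0.
by rewrite addnS !trunc_seriesS IH mulrDl -mulrA -exprSr addrA.
Qed.

Lemma size_trunc_series (x : nat -> R) m : (size (trunc_series x m) <= m)%N.
Proof.
rewrite (leq_trans (size_sum _ _ _)) //; apply/bigmax_leqP => t _.
rewrite (leq_trans (size_polyCM_leq _ _)) // size_polyXn.
by have := ltn_ord t; lia.
Qed.

Lemma trunc_series_lincomb n (c : 'I_n -> R) (y : 'I_n -> nat -> R) m :
  \sum_(i < n) (c i)%:P * trunc_series (y i) m
  = trunc_series (fun s => \sum_(i < n) c i * y i s) m.
Proof.
under eq_bigr do rewrite /trunc_series mulr_sumr.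
rewrite exchange_big /=; apply: eq_bigr => t _.
by rewrite rmorph_sum /= mulr_suml; apply: eq_bigr => i _; rewrite polyCM mulrA.
Qed.

Section Expansion.
Context {x : nat -> R} {X : K}.
Hypothesis hX : expansion_at_infinity x X.

Lemma expansion_trunc m : strictly_proper (zF R ^+ m * X - (trunc_series x m)%:F).
Proof. by rewrite tofrac_trunc_series; exact: hX. Qed.

(* The recurrence kills every coefficient of [z^n X - sum_i a_i z^(n-1-i) X]
   beyond the first [n]: what remains is the polynomial [T0] of initial
   conditions. *)
Lemma lde_ratfun {n} {a : 'I_n -> R} : satisfies_lde a x ->
  exists2 T0 : {poly R}, (size T0 <= n)%N &
    zF R ^+ n * X = T0%:F + \sum_(i < n) (a i)%:P%:F * (zF R ^+ (n - 1 - i) * X).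
Proof.
move=> hrec.
set T0 := trunc_series x n - \sum_(i < n) (a i)%:P * trunc_series x (n - 1 - i).
exists T0.
  rewrite (leq_trans (size_polyD _ _)) // geq_max size_trunc_series /= size_polyN.
  rewrite (leq_trans (size_sum _ _ _)) //; apply/bigmax_leqP => i _.
  rewrite (leq_trans (size_polyCM_leq _ _)) // (leq_trans (size_trunc_series _ _)) //.
  by rewrite -subnDA leq_subr.
have shiftT0 N : trunc_series x (n + N)
    - \sum_(i < n) (a i)%:P * trunc_series x (n - 1 - i + N) = T0 * 'X^N.
  have rec : \sum_(i < n) (a i)%:P * trunc_series (fun s => x (n - 1 - i + s)%N) N
      = trunc_series (fun s => x (n + s)%N) N.
    rewrite trunc_series_lincomb; apply: eq_bigr => t _; congr (_%:P * _).
    rewrite addnC hrec; apply: eq_bigr => i _; congr (_ * x _).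
    by have := ltn_ord i; lia.
  rewrite trunc_seriesD; under eq_bigr => i _ do rewrite trunc_seriesD mulrDr mulrA.
  by rewrite big_split /= rec -mulr_suml /T0 mulrBl opprD addrACA subrr addr0.
set c := fun i : 'I_n => (a i)%:P%:F : K.
suff : zF R ^+ n * X - \sum_(i < n) c i * (zF R ^+ (n - 1 - i) * X) - T0%:F = 0.
  by move/eqP; rewrite subr_eq0 subr_eq addrC => /eqP.
apply: strictly_proper_zF_exp_eq0 => N.
have shiftX : zF R ^+ N * (zF R ^+ n * X - \sum_(i < n) c i * (zF R ^+ (n - 1 - i) * X))
    = zF R ^+ (n + N) * X - \sum_(i < n) c i * (zF R ^+ (n - 1 - i + N) * X).
  rewrite mulrBr mulr_sumr exprD; congr (_ - _); first by ring.
  by apply: eq_bigr => i _; rewrite exprD; ring.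
have shiftT : (trunc_series x (n + N))%:F
    - \sum_(i < n) c i * (trunc_series x (n - 1 - i + N))%:F = zF R ^+ N * T0%:F.
  rewrite zF_exp -tofracM mulrC -shiftT0 tofracB rmorph_sum.
  by congr (_ - _); rewrite rmorph_sum; apply: eq_bigr => i _; rewrite rmorphM.
rewrite (mulrBr (zF R ^+ N)) shiftX -shiftT.
rewrite opprD addrACA -opprD -sumrB.
apply: strictly_properB; first exact: expansion_trunc.
apply: strictly_proper_sum => i _; rewrite -mulrBr.
by apply: strictly_properCM; exact: expansion_trunc.
Qed.

(* Comparing the coefficients of [z^0] in [z^(t+1) C X = z^(t+1) P] against
   the expansion of [X]. *)
Lemma annihilator_rec (C P : {poly R}) : C%:F * X = P%:F ->
  forall t, \sum_(j < size C) C`_j * x (t + j)%N = 0.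
Proof.
move=> hCP t; set N := t.+1.
have eC : C%:F = \sum_(j < size C) (C`_j)%:P%:F * zF R ^+ j.
  rewrite -{1}[C]coefK poly_def rmorph_sum /=; apply: eq_bigr => j _.
  by rewrite -mul_polyC tofracM zF_exp.
have hsp : strictly_proper
    ((P * 'X^N - \sum_(j < size C) (C`_j)%:P * trunc_series x (j + N))%:F).
  have -> : (P * 'X^N - \sum_(j < size C) (C`_j)%:P * trunc_series x (j + N))%:F
      = \sum_(j < size C) (C`_j)%:P%:F
          * (zF R ^+ (j + N) * X - (trunc_series x (j + N))%:F).
    rewrite tofracB tofracM -zF_exp -hCP eC rmorph_sum !mulr_suml -sumrB.
    by apply: eq_bigr => j _; rewrite rmorphM mulrBr exprD; ring.
  by apply: strictly_proper_sum => j _; apply: strictly_properCM; exact: expansion_trunc.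
have := congr1 (fun p : {poly R} => p`_0) (strictly_proper_tofrac hsp).
rewrite coefB coefMXn /= coef_sum coef0 sub0r => /eqP; rewrite oppr_eq0 => /eqP.
apply: etrans; apply: eq_bigr => j _.
by rewrite coefCM /N addnS trunc_seriesS coefD coefMX coefC /= add0r addnC.
Qed.

End Expansion.

Lemma annihilator_lde {x : nat -> R} {C : {poly R}} : C != 0 ->
  (forall t, \sum_(j < size C) C`_j * x (t + j)%N = 0) ->
  satisfies_lde (fun i : 'I_(size C).-1 => - C`_((size C).-1 - 1 - i) / lead_coef C) x.
Proof.
move=> hC h t; rewrite lead_coefE; set m := (size C).-1.
have hs : size C = m.+1 by rewrite /m prednK // size_poly_gt0.
have hl : C`_m != 0 by rewrite /m -lead_coefE lead_coef_eq0.
move: (h t); rewrite -(big_mkord xpredT (fun j => C`_j * x (t + j)%N)) hs big_mkord.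
rewrite big_ord_recr /= => /eqP; rewrite addr_eq0 => /eqP hsum.
rewrite (reindex_inj rev_ord_inj) /=.
rewrite (eq_bigr (fun i : 'I_m => - (C`_i * x (t + i)%N) / C`_m)); last first.
  move=> i _; have := ltn_ord i => hi.
  have -> : (m - 1 - (m - i.+1) = i)%N by lia.
  have -> : (t + m - 1 - (m - i.+1) = t + i)%N by lia.
  by rewrite mulrAC mulNr.
by rewrite -mulr_suml sumrN hsum opprK mulrC mulKf.
Qed.

(* Induction on [#|S|]: normalise [v j = 1] and differentiate; the
   derivatives of the other [v i] then satisfy the same system of one less
   equation, so they vanish, i.e. all [v i] are constants. *)
Lemma wronskian_free k (g : 'I_k -> K) :
  (forall c : 'I_k -> R, \sum_(i < k) (c i)%:P%:F * g i = 0 -> forall i, c i = 0) ->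
  forall (S : {set 'I_k}) (v : 'I_k -> K),
    (forall mu, (mu < #|S|)%N -> \sum_(i in S) v i * fderivn mu (g i) = 0) ->
    forall i, i \in S -> v i = 0.
Proof.
move=> gfree S v; move hm: #|S| => m; elim: m S v hm => [|m IH] S v hS hv j hj.
  by move/eqP: hS; rewrite cards_eq0 => /eqP hS; rewrite hS in_set0 in hj.
apply/eqP; apply: contraT => hvj.
set w := fun l => v l / v j.
have hw mu : (mu < m.+1)%N -> \sum_(l in S) w l * fderivn mu (g l) = 0.
  move=> /hv /(congr1 (fun y => y / v j)) /=; rewrite mul0r mulr_suml.
  by apply: etrans; apply: eq_bigr => l _; rewrite /w mulrAC.
have wj : w j = 1 by rewrite /w divff.
have hw' mu : (mu < m)%N -> \sum_(l in S :\ j) fderiv (w l) * fderivn mu (g l) = 0.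
  move=> hmu; have := congr1 (@fderiv R) (hw mu (ltnW hmu)).
  rewrite fderiv0 fderiv_sum; under eq_bigr => l _ do rewrite fderivM.
  rewrite big_split /= (hw mu.+1 hmu) addr0 (bigD1 j) //= wj fderiv1 mul0r add0r.
  by apply: etrans; apply: eq_bigl => l; rewrite in_setD1 andbC.
have Sj : #|S :\ j| = m by move: hS; rewrite (cardsD1 j) hj add1n => -[].
have w'0 l : l \in S -> fderiv (w l) = 0.
  move=> hl; have [->|hlj] := eqVneq l j; first by rewrite wj fderiv1.
  by apply: (IH (S :\ j) (fun l => fderiv (w l)) Sj hw' l); rewrite in_setD1 hlj.
have /fin_all_exists [c hc] : forall l, exists c : R, l \in S -> w l = c%:P%:F.
  move=> l; case: (boolP (l \in S)) => hl; last by exists 0.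
  by have [c hc] := fderiv_eq0 (w'0 l hl); exists c.
have csum : \sum_(i < k) (if i \in S then c i else 0)%:P%:F * g i = 0.
  rewrite -[RHS](hw 0%N (ltn0Sn m)) [RHS]big_mkcond; apply: eq_bigr => l _.
  by case: ifP => hl; rewrite ?hc // polyC0 tofrac0 !mul0r.
have := gfree _ csum j; rewrite hj => cj.
by have := hc j hj; rewrite wj cj polyC0 tofrac0 => /eqP; rewrite oner_eq0.
Qed.

Section Minimality.
Context {n : nat} {x : nat -> R} {X : K}.
Hypothesis hX : expansion_at_infinity x X.
Hypothesis hmin : forall (m : nat) (c : 'I_m -> R), (m < n)%N -> ~ satisfies_lde c x.

Lemma annihilator_eq0 (C P : {poly R}) : (size C <= n)%N -> C%:F * X = P%:F -> C = 0.
Proof.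
move=> hsz /(annihilator_rec hX) hrec; apply/eqP; apply: contraT => hC.
have hlt : ((size C).-1 < n)%N by rewrite prednK ?size_poly_gt0.
by case: (hmin _ _ hlt (annihilator_lde hC hrec)).
Qed.

Lemma fderivn_zF_exp_free (c : 'I_n -> R) :
  \sum_(i < n) (c i)%:P%:F * fderivn n (zF R ^+ (n - 1 - i) * X) = 0 ->
  forall i, c i = 0.
Proof.
move=> hc; set C := \sum_(i < n) (c i)%:P * 'X^(n - 1 - i).
have [P _ hP] : exists2 P : {poly R}, (size P <= n)%N & C%:F * X = P%:F.
  apply: fderivn_eq0; rewrite -hc rmorph_sum /= mulr_suml fderivn_sum.
  by apply: eq_bigr => i _; rewrite rmorphM /= -mulrA fderivnCM -zF_exp.
have C0 : C = 0.
  apply: annihilator_eq0 hP; rewrite (leq_trans (size_sum _ _ _)) //.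
  apply/bigmax_leqP => i _; rewrite (leq_trans (size_polyCM_leq _ _)) // size_polyXn.
  by have := ltn_ord i; lia.
move=> i; transitivity C`_(n - 1 - i); last by rewrite C0 coef0.
rewrite /C coef_sum (bigD1 i) //= coefCM coefXn eqxx mulr1 big1 ?addr0 // => j ji.
rewrite coefCM coefXn; case: eqP => [e|_]; last by rewrite mulr0.
by case/eqP: ji; apply: val_inj; move: e (ltn_ord i) (ltn_ord j) => /=; lia.
Qed.

Lemma fderivn_zF_exp_wronskian_free (v : 'I_n -> K) :
  (forall mu, (mu < n)%N ->
     \sum_(i < n) v i * fderivn (n + mu) (zF R ^+ (n - 1 - i) * X) = 0) ->
  forall i, v i = 0.
Proof.
move=> hv i; pose W (j : 'I_n) := fderivn n (zF R ^+ (n - 1 - j) * X).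
apply: (@wronskian_free n W fderivn_zF_exp_free [set: 'I_n] v _ i (in_setT i)).
rewrite cardsT card_ord => mu lt_mu; rewrite -[RHS](hv mu lt_mu).
rewrite (eq_bigl xpredT) => [|j]; last by rewrite in_setT.
by apply: eq_bigr => j _; rewrite addnC fderivn_addn.
Qed.

End Minimality.

End RationalFunctions.

Theorem corollary1 (R : realFieldType) (n : nat) (hn : (0 < n)%N)
  (a : 'I_n -> R) (x : nat -> R)
  (hrec : satisfies_lde a x)
  (hmin : forall (m : nat) (c : 'I_m -> R), (m < n)%N -> ~ satisfies_lde c x)
  (X : ratfun R) (hX : expansion_at_infinity x X) :
  let N : 'M[ratfun R]_(n.+1) :=
    \matrix_(mu < n.+1, j < n.+1) fderivn (n + mu) (zF R ^+ (n - j) * X) in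
  \rank N = n /\
  (forall alpha : 'I_n -> ratfun R,
     (forall mu : 'I_n.+1,
        fderivn (n + mu) (zF R ^+ n * X)
        = \sum_(i < n) alpha i * fderivn (n + mu) (zF R ^+ (n - 1 - i) * X))
     <-> (forall i : 'I_n, alpha i = (a i)%:P%:F)).
Proof.
move=> N.
have N0 mu : N mu ord0 = fderivn (n + mu) (zF R ^+ n * X) by rewrite mxE subn0.
have Nlift mu (i : 'I_n) :
    N mu (lift ord0 i) = fderivn (n + mu) (zF R ^+ (n - 1 - i) * X).
  by rewrite mxE lift0 subnS subnAC subn1.
have col0 mu : N mu ord0 = \sum_(i < n) (a i)%:P%:F * N mu (lift ord0 i).
  rewrite N0; have [T0 szT0 ->] := lde_ratfun hX hrec.
  rewrite fderivnD fderivn_tofrac derivn_poly0 ?(leq_trans szT0) ?leq_addr //.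
  rewrite tofrac0 add0r fderivn_sum; apply: eq_bigr => i _.
  by rewrite fderivnCM Nlift.
have free (v : 'I_n -> ratfun R) :
    (forall mu, \sum_(i < n) v i * N mu (lift ord0 i) = 0) -> forall i, v i = 0.
  move=> hv; apply: (fderivn_zF_exp_wronskian_free hX hmin) => mu lt_mu.
  rewrite -[RHS](hv (widen_ord (leqnSn n) (Ordinal lt_mu))).
  by apply: eq_bigr => j _; rewrite Nlift.
split; first exact: rank_dep_first_col col0 free.
move=> alpha; rewrite -(dep_first_col_coefP col0 free).
split=> alpha_dep mu; [rewrite N0 alpha_dep | rewrite -N0 alpha_dep].
  all: by apply: eq_bigr => i _; rewrite Nlift.
Qed.
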